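(* Let $N\ge 1$, $d\ge 1$, let $p_1,\dots,p_N>0$ with $\sum_{c=1}^N p_c=1$, and let $f^1,\dots,f^N:\mathbb{R}^d\to\mathbb{R}$ be differentiable functions such that each $f^c$ is $L$-smooth and $m$-strongly convex, where $0<m\le L$. Let $\eta\in(0,\frac{1}{L+m}]$. Then for any vectors $\theta^1,\dots,\theta^N,\beta^1,\dots,\beta^N\in\mathbb{R}^d$, writing $\theta=\sum_{c=1}^N p_c\theta^c$, $\beta=\sum_{c=1}^N p_c\beta^c$, $G(\theta^{1:N})=\sum_{c=1}^N p_c\nabla f^c(\theta^c)$ and $G(\beta^{1:N})=\sum_{c=1}^N p_c\nabla f^c(\beta^c)$, we have $$\big\|\beta-\theta-\eta\big(G(\beta^{1:N})-G(\theta^{1:N})\big)\big\|_2^2\le (1-\eta m)\|\beta-\theta\|_2^2+4\eta L\sum_{c=1}^N p_c\big(\|\beta^c-\beta\|_2^2+\|\theta^c-\theta\|_2^2\big).$$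
   Context: A differentiable $g:\mathbb{R}^d\to\mathbb{R}$ is $L$-smooth if $g(y)\le g(x)+\langle\nabla g(x),y-x\rangle+\frac L2\|y-x\|_2^2$ for all $x,y$ (equivalently $\nabla g$ is $L$-Lipschitz), and $m$-strongly convex if $g(x)\ge g(y)+\langle\nabla g(y),x-y\rangle+\frac m2\|x-y\|_2^2$ for all $x,y$. *)

From HB Require Import structures.
From mathcomp Require Import all_boot all_order all_algebra.
From mathcomp Require Import all_classical all_reals all_analysis.
Set Implicit Arguments. Unset Strict Implicit. Unset Printing Implicit Defensive.
Import Order.TTheory GRing.Theory Num.Theory.
Import numFieldNormedType.Exports.
Local Open Scope ring_scope.

Section Defs.
Context {R : realType} {d : nat}.

Definition dotv (u v : 'rV[R]_d) : R := \sum_(i < d) u 0 i * v 0 i.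
Definition sqnorm (u : 'rV[R]_d) : R := dotv u u.

Definition grad (g : 'rV[R]_d -> R) (x : 'rV[R]_d) : 'rV[R]_d :=
  \row_(i < d) ('d g x (delta_mx 0 i : 'rV[R]_d)).

Definition L_smooth (L : R) (g : 'rV[R]_d -> R) : Prop :=
  forall x y, g y <= g x + dotv (grad g x) (y - x) + L / 2 * sqnorm (y - x).

Definition strongly_convex (m : R) (g : 'rV[R]_d -> R) : Prop :=
  forall x y, g x >= g y + dotv (grad g y) (x - y) + m / 2 * sqnorm (x - y).
End Defs.

From HB Require Import structures.
From mathcomp Require Import all_boot all_order all_algebra.
From mathcomp Require Import all_classical all_reals all_analysis.
From mathcomp Require Import ring lra.
Set Implicit Arguments. Unset Strict Implicit. Unset Printing Implicit Defensive.
Import Order.TTheory GRing.Theory Num.Theory.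
Import numFieldNormedType.Exports.
Local Open Scope ring_scope.

(** Each client contributes a gradient step: by the cocoercivity of the
    gradient of an [m]-strongly convex, [L]-smooth function,
    [(L + m) <y - x, G y - G x> >= m L |y - x|^2 + |G y - G x|^2], the step
    contracts its own displacement by [1 - eta m].  The averaged step differs
    from the average of the client steps only through the drift of each client
    from the average, which Young's inequality charges at rate [4 eta L];
    Jensen's inequality for [|.|^2] turns the client bounds into a bound on the
    averaged iterate. *)

Section InnerProduct.
Context {R : realType} {d : nat}.
Implicit Types (u v w : 'rV[R]_d).

Lemma dotvC u v : dotv u v = dotv v u.
Proof. by apply: eq_bigr => i _; rewrite mulrC. Qed.

Lemma dotvDl u v w : dotv (u + v) w = dotv u w + dotv v w.
Proof. by rewrite /dotv -big_split; apply: eq_bigr => i _; rewrite mxE mulrDl. Qed.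

Lemma dotvZl k u w : dotv (k *: u) w = k * dotv u w.
Proof. by rewrite /dotv mulr_sumr; apply: eq_bigr => i _; rewrite mxE mulrA. Qed.

Lemma dotvNl u w : dotv (- u) w = - dotv u w.
Proof. by rewrite -scaleN1r dotvZl mulN1r. Qed.

Lemma dotvBl u v w : dotv (u - v) w = dotv u w - dotv v w.
Proof. by rewrite dotvDl dotvNl. Qed.

Lemma dotvDr u v w : dotv w (u + v) = dotv w u + dotv w v.
Proof. by rewrite dotvC dotvDl !(dotvC w). Qed.

Lemma dotvZr k u w : dotv w (k *: u) = k * dotv w u.
Proof. by rewrite dotvC dotvZl dotvC. Qed.

Lemma dotvNr u w : dotv w (- u) = - dotv w u.
Proof. by rewrite dotvC dotvNl dotvC. Qed.

Lemma dotvBr u v w : dotv w (u - v) = dotv w u - dotv w v.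
Proof. by rewrite dotvDr dotvNr. Qed.

Lemma dotv_suml n (F : 'I_n -> 'rV[R]_d) w :
  dotv (\sum_(c < n) F c) w = \sum_(c < n) dotv (F c) w.
Proof.
rewrite /dotv exchange_big; apply: eq_bigr => i _.
by rewrite summxE mulr_suml.
Qed.

Lemma dotv_sumr n (F : 'I_n -> 'rV[R]_d) w :
  dotv w (\sum_(c < n) F c) = \sum_(c < n) dotv w (F c).
Proof. by rewrite dotvC dotv_suml; apply: eq_bigr => c _; rewrite dotvC. Qed.

Lemma sqnorm_ge0 u : 0 <= sqnorm u.
Proof. by apply: sumr_ge0 => i _; rewrite -expr2 sqr_ge0. Qed.

Lemma sqnormD u v : sqnorm (u + v) = sqnorm u + 2 * dotv u v + sqnorm v.
Proof. rewrite /sqnorm !dotvDl !dotvDr (dotvC v u); ring. Qed.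

Lemma sqnormB u v : sqnorm (u - v) = sqnorm u - 2 * dotv u v + sqnorm v.
Proof. rewrite /sqnorm !dotvBl !dotvBr (dotvC v u); ring. Qed.

Lemma sqnormZ k u : sqnorm (k *: u) = k ^+ 2 * sqnorm u.
Proof. by rewrite /sqnorm dotvZl dotvZr mulrA expr2. Qed.

Lemma sqnormB_le u v : sqnorm (u - v) <= 2 * sqnorm u + 2 * sqnorm v.
Proof. have := sqnorm_ge0 (u + v); rewrite sqnormB sqnormD; lra. Qed.

Lemma young_dotv k u v : - (2 * k * dotv u v) <= k ^+ 2 * sqnorm u + sqnorm v.
Proof. have := sqnorm_ge0 (k *: u + v); rewrite sqnormD sqnormZ dotvZl; lra. Qed.

Lemma sqnormBB_le u v u' v' :
  sqnorm ((u - v) - (u' - v')) <= 2 * (sqnorm (u' - u) + sqnorm (v' - v)).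
Proof.
have -> : (u - v) - (u' - v') = (v' - v) - (u' - u).
  by rewrite !opprB addrACA [RHS]addrACA (addrC v').
by have := sqnormB_le (v' - v) (u' - u); lra.
Qed.

End InnerProduct.

Ltac dotv_lra x y u v :=
  rewrite /sqnorm;
  repeat progress rewrite ?dotvDl ?dotvNl ?dotvZl ?dotvDr ?dotvNr ?dotvZr;
  rewrite ?(dotvC y x) ?(dotvC u x) ?(dotvC v x) ?(dotvC u y) ?(dotvC v y)
    ?(dotvC v u);
  lra.

Section ConvexCombination.
Context {R : realType} {d n : nat}.
Variable p : 'I_n -> R.
Hypothesis p_ge0 : forall c, 0 <= p c.
Hypothesis p_sum1 : \sum_(c < n) p c = 1.

Lemma sqnorm_convex_le (v : 'I_n -> 'rV[R]_d) :
  sqnorm (\sum_(c < n) p c *: v c) <= \sum_(c < n) p c * sqnorm (v c).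
Proof.
set vb := \sum_(c < n) p c *: v c.
have spread_ge0 : 0 <= \sum_(c < n) p c * sqnorm (v c - vb).
  by apply: sumr_ge0 => c _; rewrite mulr_ge0 ?sqnorm_ge0.
have spreadE : \sum_(c < n) p c * sqnorm (v c - vb) =
    \sum_(c < n) p c * sqnorm (v c) - sqnorm vb.
  under eq_bigr => c _ do rewrite sqnormB !mulrDr mulrN.
  rewrite !big_split /= sumrN -!mulr_suml p_sum1 mul1r.
  have -> : \sum_(c < n) p c * (2 * dotv (v c) vb) = 2 * sqnorm vb.
    rewrite /sqnorm {3}/vb dotv_suml mulr_sumr.
    by apply: eq_bigr => c _; rewrite dotvZl; ring.
  ring.
by rewrite spreadE subr_ge0 in spread_ge0.
Qed.

Lemma sqnormB_convex_le (a : 'rV[R]_d) (v : 'I_n -> 'rV[R]_d) (eta : R) :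
  sqnorm (a - eta *: \sum_(c < n) p c *: v c)
    <= sqnorm a
       + \sum_(c < n) p c * (eta ^+ 2 * sqnorm (v c) - 2 * eta * dotv a (v c)).
Proof.
rewrite sqnormB sqnormZ dotvZr dotv_sumr.
have -> : \sum_(c < n) p c * (eta ^+ 2 * sqnorm (v c) - 2 * eta * dotv a (v c))
    = eta ^+ 2 * \sum_(c < n) p c * sqnorm (v c)
      - 2 * eta * \sum_(c < n) dotv a (p c *: v c).
  rewrite !mulr_sumr -sumrB; apply: eq_bigr => c _; rewrite dotvZr; ring.
have := ler_wpM2l (sqr_ge0 eta) (sqnorm_convex_le v); lra.
Qed.

End ConvexCombination.

Section Cocoercivity.
Context {R : realType} {d : nat}.
Implicit Types (x y : 'rV[R]_d).
Variables (L m : R) (g : 'rV[R]_d -> R) (G : 'rV[R]_d -> 'rV[R]_d).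
Hypothesis m_le_L : m <= L.
Hypothesis upper_bound :
  forall x y, g y <= g x + dotv (G x) (y - x) + L / 2 * sqnorm (y - x).
Hypothesis lower_bound :
  forall x y, g x >= g y + dotv (G y) (x - y) + m / 2 * sqnorm (x - y).

(* The gradient increment of the convex, [(L - m)]-smooth function
   [g - m/2 |.|^2]. *)
Let residual x y := G y - G x - m *: (y - x).

Lemma dotv_residual_le x y : dotv (y - x) (residual x y) <= (L - m) * sqnorm (y - x).
Proof.
move: (upper_bound x y) (upper_bound y x); rewrite /residual.
move: (G x) (G y) => u v; dotv_lra x y u v.
Qed.

(* Sum the four quadratic bounds at [y - s w] and [x + s w]: the values of [g]
   there cancel. *)
Lemma residual_quadratic_le x y (s : R) :
  (2 * s - (L - m) * s ^+ 2) * sqnorm (residual x y) <= dotv (y - x) (residual x y).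
Proof.
move: (lower_bound (y - s *: residual x y) x)
  (upper_bound y (y - s *: residual x y))
  (lower_bound (x + s *: residual x y) y)
  (upper_bound x (x + s *: residual x y)); rewrite /residual.
move: (G x) (G y) => u v; dotv_lra x y u v.
Qed.

Lemma residual_cocoercive x y :
  sqnorm (residual x y) <= (L - m) * dotv (y - x) (residual x y).
Proof.
have [eq_Lm | ne_Lm] := eqVneq L m.
  move: (dotv_residual_le x y) (residual_quadratic_le x y 1).
  rewrite eq_Lm subrr !mul0r subr0 mulr1.
  have := sqnorm_ge0 (residual x y); lra.
have LBm_gt0 : 0 < L - m by rewrite subr_gt0 lt_neqAle eq_sym ne_Lm m_le_L.
move: (residual_quadratic_le x y (L - m)^-1).
have -> : 2 * (L - m)^-1 - (L - m) * (L - m)^-1 ^+ 2 = (L - m)^-1.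
  by field; rewrite gt_eqF.
by rewrite -ler_pdivrMl ?invr_gt0 // invrK.
Qed.

Lemma gradB_cocoercive x y :
  m * L * sqnorm (y - x) + sqnorm (G y - G x)
    <= (L + m) * dotv (y - x) (G y - G x).
Proof.
move: (residual_cocoercive x y); rewrite /residual; move: (G x) (G y) => u v; dotv_lra x y u v.
Qed.

End Cocoercivity.

Lemma cocoercive_step_le {R : realType} {d : nat} (G : 'rV[R]_d -> 'rV[R]_d)
    (L m eta : R) (x y z : 'rV[R]_d) :
  0 < m -> m <= L -> 0 < eta -> eta * (L + m) <= 1 ->
  m * L * sqnorm (y - x) + sqnorm (G y - G x) <= (L + m) * dotv (y - x) (G y - G x) ->
  eta ^+ 2 * sqnorm (G y - G x) - 2 * eta * dotv z (G y - G x)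
    <= - (eta * m * sqnorm (y - x)) + eta * (L + m) * sqnorm (z - (y - x)).
Proof.
move=> m_gt0 m_le_L eta_gt0 eta_le coco.
have K_gt0 : 0 < L + m by lra.
have -> : dotv z (G y - G x)
    = dotv (y - x) (G y - G x) + dotv (z - (y - x)) (G y - G x).
  by rewrite [dotv (z - _) _]dotvBl; ring.
have young := young_dotv (L + m) (z - (y - x)) (G y - G x).
have A_ge0 := sqnorm_ge0 (y - x); have D_ge0 := sqnorm_ge0 (G y - G x).
move: coco young A_ge0 D_ge0.
move: (sqnorm (y - x)) (sqnorm (G y - G x)) => A D.
move: (dotv (y - x) _) (dotv (z - _) _) (sqnorm (z - _)) => X Y B.
move=> coco young A_ge0 D_ge0.
rewrite -(ler_pM2l K_gt0).
have p1 := ler_wpM2l (ltW eta_gt0) coco.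
have p2 := ler_wpM2l (ltW eta_gt0) young.
have p3 := ler_wpM2l (mulr_ge0 (ltW eta_gt0) D_ge0) eta_le.
have p4 : 0 <= eta * m * A * (L - m) by rewrite !mulr_ge0 ?subr_ge0 // ltW.
rewrite !expr2 in p2 *; lra.
Qed.

Lemma client_step_le {R : realType} {d : nat} (G : 'rV[R]_d -> 'rV[R]_d)
    (L m eta : R) (th be tc bc : 'rV[R]_d) :
  0 < m -> m <= L -> 0 < eta -> eta * (L + m) <= 1 ->
  m * L * sqnorm (bc - tc) + sqnorm (G bc - G tc)
    <= (L + m) * dotv (bc - tc) (G bc - G tc) ->
  eta ^+ 2 * sqnorm (G bc - G tc) - 2 * eta * dotv (be - th) (G bc - G tc)
    <= - (eta * m) * sqnorm (bc - tc)
       + 4 * eta * L * (sqnorm (bc - be) + sqnorm (tc - th)).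
Proof.
move=> m_gt0 m_le_L eta_gt0 eta_le coco.
have K_gt0 : 0 < L + m by lra.
have := cocoercive_step_le (be - th) m_gt0 m_le_L eta_gt0 eta_le coco.
have := ler_wpM2l (mulr_ge0 (ltW eta_gt0) (ltW K_gt0)) (sqnormBB_le be th bc tc).
have e_ge0 : 0 <= sqnorm (bc - be) + sqnorm (tc - th).
  by rewrite addr_ge0 ?sqnorm_ge0.
have : eta * (L + m) * (2 * (sqnorm (bc - be) + sqnorm (tc - th)))
    <= eta * (2 * L) * (2 * (sqnorm (bc - be) + sqnorm (tc - th))).
  by rewrite ler_wpM2r ?mulr_ge0 // (ler_wpM2l (ltW eta_gt0)); lra.
lra.
Qed.

Theorem lemma4p1 (R : realType) (N d : nat) (hN : (1 <= N)%N) (hd : (1 <= d)%N)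
  (p : 'I_N -> R) (hp : forall c, 0 < p c) (hpsum : \sum_(c < N) p c = 1)
  (f : 'I_N -> 'rV[R]_d -> R) (L m : R) (hm : 0 < m) (hmL : m <= L)
  (hdiff : forall c x, differentiable (f c) x)
  (hsmooth : forall c, L_smooth L (f c))
  (hconv : forall c, strongly_convex m (f c))
  (eta : R) (heta0 : 0 < eta) (heta : eta <= 1 / (L + m))
  (theta beta : 'I_N -> 'rV[R]_d) :
  let th := \sum_(c < N) p c *: theta c in
  let be := \sum_(c < N) p c *: beta c in
  let Gth := \sum_(c < N) p c *: grad (f c) (theta c) in
  let Gbe := \sum_(c < N) p c *: grad (f c) (beta c) in
  sqnorm (be - th - eta *: (Gbe - Gth))
    <= (1 - eta * m) * sqnorm (be - th)
       + 4 * eta * L * \sum_(c < N) p c * (sqnorm (beta c - be) + sqnorm (theta c - th)).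
Proof.
cbv zeta.
set th := \sum_(c < N) p c *: theta c; set be := \sum_(c < N) p c *: beta c.
have p_ge0 c : 0 <= p c by exact: ltW.
have K_gt0 : 0 < L + m by lra.
have eta_le : eta * (L + m) <= 1 by rewrite -ler_pdivlMr // mul1r -div1r.
pose a c := beta c - theta c.
pose e c := sqnorm (beta c - be) + sqnorm (theta c - th).
have convex_diff (u v : 'I_N -> 'rV[R]_d) :
    \sum_(c < N) p c *: u c - \sum_(c < N) p c *: v c = \sum_(c < N) p c *: (u c - v c).
  by rewrite -sumrB; apply: eq_bigr => c _; rewrite scalerBr.
have client c := client_step_le th be hm hmL heta0 eta_le
  (gradB_cocoercive hmL (hsmooth c) (hconv c) (theta c) (beta c)).
rewrite convex_diff.
apply: le_trans (sqnormB_convex_le p_ge0 hpsum _ _ eta) _.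
apply: le_trans (lerD (lexx _) (ler_sum _ (fun c _ => ler_wpM2l (p_ge0 c) (client c)))) _.
have weighted : \sum_(c < N) p c * (- (eta * m) * sqnorm (a c) + 4 * eta * L * e c)
    = - (eta * m) * \sum_(c < N) p c * sqnorm (a c)
      + 4 * eta * L * \sum_(c < N) p c * e c.
  by rewrite !mulr_sumr -big_split /=; apply: eq_bigr => c _; ring.
have jensen := sqnorm_convex_le p_ge0 hpsum a.
rewrite -convex_diff -/th -/be in jensen.
have := ler_wpM2l (mulr_ge0 (ltW heta0) (ltW hm)) jensen.
rewrite weighted /e; lra.
Qed.
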